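(* Let $X$ be a complex vector space equipped with an inner product $\langle\cdot,\cdot\rangle'$. Suppose that for each $\alpha\in(0,1]$ we are given a map $\langle\cdot,\cdot\rangle_\alpha : X\times X\to\mathbb{C}$ and real constants $A_\alpha,B_\alpha$ with $0<A_\alpha\le B_\alpha<\infty$ such that for all $x,y\in X$ and all $\alpha\in(0,1]$, \[ A_\alpha\,|\langle x,y\rangle'| \le |\langle x,y\rangle_\alpha| \le B_\alpha\,|\langle x,y\rangle'|. \] Then for all $x,y,z\in X$, all $k\in\mathbb{C}$ and all $\alpha\in(0,1]$: 1. $\langle x,x\rangle_\alpha=0$ if and only if $x=0$; 2. $\langle 0,y\rangle_\alpha=0$; 3. $\frac{|k|A_\alpha}{B_\alpha}|\langle x,y\rangle_\alpha|\le |\langle kx,y\rangle_\alpha|\le \frac{|k|B_\alpha}{A_\alpha}|\langle x,y\rangle_\alpha|$; 4. $\frac{|k|A_\alpha}{B_\alpha}|\langle x,y\rangle_\alpha|\le |\langle x,ky\rangle_\alpha|\le \frac{|k|B_\alpha}{A_\alpha}|\langle x,y\rangle_\alpha|$; 5. $\frac{|k|A_\alpha}{B_\alpha}|\langle y,x\rangle_\alpha|\le |\langle kx,y\rangle_\alpha|\le \frac{|k|B_\alpha}{A_\alpha}|\langle y,x\rangle_\alpha|$; 6. $\frac{|k|A_\alpha}{B_\alpha}|\langle y,x\rangle_\alpha|\le |\langle x,|k|y\rangle_\alpha|\le \frac{|k|B_\alpha}{A_\alpha}|\langle y,x\rangle_\alpha|$; 7. $\frac{A_\alpha}{B_\alpha}|\langle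 x,ky\rangle_\alpha|\le |\langle kx,y\rangle_\alpha|\le \frac{B_\alpha}{A_\alpha}|\langle x,ky\rangle_\alpha|$; 8. $\frac{A_\alpha}{B_\alpha}|\langle kx,y\rangle_\alpha|\le |\langle x,ky\rangle_\alpha|\le \frac{B_\alpha}{A_\alpha}|\langle kx,y\rangle_\alpha|$; 9. $\frac{A_\alpha}{B_\alpha}|\langle ky,x\rangle_\alpha|\le |\langle kx,y\rangle_\alpha|\le \frac{B_\alpha}{A_\alpha}|\langle ky,x\rangle_\alpha|$; 10. $\frac{A_\alpha}{B_\alpha}|\langle ky,x\rangle_\alpha|\le |\langle x,ky\rangle_\alpha|\le \frac{B_\alpha}{A_\alpha}|\langle ky,x\rangle_\alpha|$; 11. $|\langle kx+z,y\rangle_\alpha|\le \frac{B_\alpha}{A_\alpha}\big(|k|\,|\langle x,y\rangle_\alpha|+|\langle z,y\rangle_\alpha|\big)$; 12. $|\langle x,ky+z\rangle_\alpha|\le \frac{B_\alpha}{A_\alpha}\big(|k|\,|\langle x,y\rangle_\alpha|+|\langle x,z\rangle_\alpha|\big)$.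
   Context: The map $\langle\cdot,\cdot\rangle_\alpha$ satisfying the two-sided bound is the paper's (simplified) ''fuzzy inner product'' relative to the classical inner product $\langle\cdot,\cdot\rangle'$. *)

From HB Require Import structures.
From mathcomp Require Import all_boot all_order all_algebra.
From mathcomp Require Import reals.
From mathcomp Require Import complex.
Set Implicit Arguments. Unset Strict Implicit. Unset Printing Implicit Defensive.
Import Order.TTheory GRing.Theory Num.Theory.
Local Open Scope ring_scope.

Definition is_inner_product (R : realType) (X : lmodType R[i])
    (ip : X -> X -> R[i]) : Prop :=
  [/\ (forall (a : R[i]) (x y z : X), ip (a *: x + y) z = a * ip x z + ip y z),
      (forall x y : X, ip y x = conjc (ip x y)),
      (forall x : X, 0 <= ip x x) &
      (forall x : X, ip x x = 0 -> x = 0)].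

From HB Require Import structures.
From mathcomp Require Import all_boot all_order all_algebra.
From mathcomp Require Import reals.
From mathcomp Require Import complex.
From mathcomp Require Import ring.
Set Implicit Arguments. Unset Strict Implicit. Unset Printing Implicit Defensive.
Import Order.TTheory GRing.Theory Num.Theory.
Local Open Scope ring_scope.

(* The two-sided bound makes [|<u,v>_a|] comparable to [|<u,v>'|] up to the
   factors [A] and [B]; in particular [<u,v>_a] vanishes exactly when [<u,v>']
   does. Each estimate is then an identity or a triangle inequality between
   moduli of the classical inner product (sesquilinearity, conjugate symmetry),
   transported there and back: one direction costs a factor [B], the other a
   factor [1/A], whence the ratios [B/A] and [A/B]. *)

Section InnerProductNorms.
Variables (R : realType) (X : lmodType R[i]) (ip : X -> X -> R[i]).
Hypothesis ip_linear :
  forall (a : R[i]) (x y z : X), ip (a *: x + y) z = a * ip x z + ip y z.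
Hypothesis ip_conj : forall x y : X, ip y x = conjc (ip x y).

Lemma ip0l (y : X) : ip 0 y = 0.
Proof.
apply: (addrI (ip 0 y)); rewrite addr0.
by have := ip_linear 1 0 0 y; rewrite scale1r addr0 mul1r.
Qed.

Lemma ip0r (x : X) : ip x 0 = 0.
Proof. by rewrite ip_conj ip0l conjc0. Qed.

Lemma ipZl (a : R[i]) (x y : X) : ip (a *: x) y = a * ip x y.
Proof. by rewrite -[a *: x]addr0 ip_linear ip0l addr0. Qed.

Lemma ipDZr (a : R[i]) (x y z : X) :
  ip x (a *: y + z) = conjc a * ip x y + ip x z.
Proof. by rewrite ip_conj ip_linear rmorphD rmorphM /= -!ip_conj. Qed.

Lemma ipZr (a : R[i]) (x y : X) : ip x (a *: y) = conjc a * ip x y.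
Proof. by rewrite -[a *: y]addr0 ipDZr ip0r addr0. Qed.

Lemma norm_ipC (x y : X) : `|ip y x| = `|ip x y|.
Proof. by rewrite ip_conj normcJ. Qed.

Lemma norm_ipZl (a : R[i]) (x y : X) : `|ip (a *: x) y| = `|a| * `|ip x y|.
Proof. by rewrite ipZl normrM. Qed.

Lemma norm_ipZr (a : R[i]) (x y : X) : `|ip x (a *: y)| = `|a| * `|ip x y|.
Proof. by rewrite ipZr normrM normcJ. Qed.

Lemma norm_ipDZl_le (a : R[i]) (x y z : X) :
  `|ip (a *: x + z) y| <= `|a| * `|ip x y| + `|ip z y|.
Proof. by rewrite ip_linear -normrM ler_normD. Qed.

Lemma norm_ipDZr_le (a : R[i]) (x y z : X) :
  `|ip x (a *: y + z)| <= `|a| * `|ip x y| + `|ip x z|.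
Proof. by rewrite ipDZr -(normcJ a) -normrM ler_normD. Qed.

End InnerProductNorms.

Section FuzzyInnerProduct.
Variables (R : realType) (X : lmodType R[i]) (ip' ip : X -> X -> R[i]).
Variables (A B : R[i]).
Hypotheses (A_gt0 : 0 < A) (B_gt0 : 0 < B).
Hypothesis ip_lb : forall x y : X, A * `|ip' x y| <= `|ip x y|.
Hypothesis ip_ub : forall x y : X, `|ip x y| <= B * `|ip' x y|.

Lemma fuzzy_ip_eq0 (x y : X) : ip x y = 0 <-> ip' x y = 0.
Proof.
split=> [ip0 | ip'0]; apply/normr0_eq0/eqP; rewrite eq_le normr_ge0 andbT.
  by rewrite -(pmulr_rle0 _ A_gt0); have := ip_lb x y; rewrite ip0 normr0.
by apply: le_trans (ip_ub x y) _; rewrite ip'0 normr0 mulr0.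
Qed.

Lemma fuzzy_norm_ip_scale (c : R[i]) (x y x' y' : X) :
  0 <= c -> `|ip' x' y'| = c * `|ip' x y| ->
  c * A / B * `|ip x y| <= `|ip x' y'| /\ `|ip x' y'| <= c * B / A * `|ip x y|.
Proof.
move=> c_ge0 ip'E.
have AB_ge0 := divr_ge0 (mulr_ge0 c_ge0 (ltW A_gt0)) (ltW B_gt0).
have BA_ge0 := divr_ge0 (mulr_ge0 c_ge0 (ltW B_gt0)) (ltW A_gt0).
split.
  apply: le_trans (ip_lb x' y'); rewrite ip'E.
  have -> : A * (c * `|ip' x y|) = c * A / B * (B * `|ip' x y|).
    by field; rewrite gt_eqF.
  by apply: ler_wpM2l.
apply: (le_trans (ip_ub x' y')); rewrite ip'E.
have -> : B * (c * `|ip' x y|) = c * B / A * (A * `|ip' x y|).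
  by field; rewrite gt_eqF.
by apply: ler_wpM2l.
Qed.

Lemma fuzzy_norm_ip_eq (x y x' y' : X) : `|ip' x' y'| = `|ip' x y| ->
  A / B * `|ip x y| <= `|ip x' y'| /\ `|ip x' y'| <= B / A * `|ip x y|.
Proof.
move=> ip'E; rewrite -[A / B]mul1r -[B / A]mul1r !mulrA.
by apply: fuzzy_norm_ip_scale; rewrite ?mul1r.
Qed.

Lemma fuzzy_norm_ip_le (c : R[i]) (x y x1 y1 x2 y2 : X) : 0 <= c ->
  `|ip' x y| <= c * `|ip' x1 y1| + `|ip' x2 y2| ->
  `|ip x y| <= B / A * (c * `|ip x1 y1| + `|ip x2 y2|).
Proof.
move=> c_ge0 ip'_le; apply: (le_trans (ip_ub x y)).
have -> : B / A * (c * `|ip x1 y1| + `|ip x2 y2|)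
        = B * (c * (`|ip x1 y1| / A) + `|ip x2 y2| / A).
  by field; rewrite gt_eqF.
apply: ler_wpM2l; first exact: ltW.
apply: (le_trans ip'_le); apply: lerD; first apply: ler_wpM2l => //.
  by rewrite ler_pdivlMr // mulrC.
by rewrite ler_pdivlMr // mulrC.
Qed.

End FuzzyInnerProduct.

Theorem mainTheorem4 (R : realType) (X : lmodType R[i])
    (ip' : X -> X -> R[i]) (ipa : R -> X -> X -> R[i]) (A B : R -> R) :
  is_inner_product ip' ->
  (forall a : R, 0 < a <= 1 -> 0 < A a <= B a) ->
  (forall (a : R) (x y : X), 0 < a <= 1 ->
     ((A a)%:C)%C * `|ip' x y| <= `|ipa a x y| /\
     `|ipa a x y| <= ((B a)%:C)%C * `|ip' x y|) ->
  forall (a : R), 0 < a <= 1 ->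
  let Aa := ((A a)%:C)%C in let Ba := ((B a)%:C)%C in let ip := ipa a in
  forall (x y z : X) (k : R[i]),
  ((ip x x = 0 <-> x = 0))
  /\ (ip 0 y = 0)
  /\ ((`|k| * Aa / Ba * `|ip x y| <= `|ip (k *: x) y| /\
         `|ip (k *: x) y| <= `|k| * Ba / Aa * `|ip x y|))
  /\ ((`|k| * Aa / Ba * `|ip x y| <= `|ip x (k *: y)| /\
         `|ip x (k *: y)| <= `|k| * Ba / Aa * `|ip x y|))
  /\ ((`|k| * Aa / Ba * `|ip y x| <= `|ip (k *: x) y| /\
         `|ip (k *: x) y| <= `|k| * Ba / Aa * `|ip y x|))
  /\ ((`|k| * Aa / Ba * `|ip y x| <= `|ip x (`|k| *: y)| /\
         `|ip x (`|k| *: y)| <= `|k| * Ba / Aa * `|ip y x|))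
  /\ ((Aa / Ba * `|ip x (k *: y)| <= `|ip (k *: x) y| /\
         `|ip (k *: x) y| <= Ba / Aa * `|ip x (k *: y)|))
  /\ ((Aa / Ba * `|ip (k *: x) y| <= `|ip x (k *: y)| /\
         `|ip x (k *: y)| <= Ba / Aa * `|ip (k *: x) y|))
  /\ ((Aa / Ba * `|ip (k *: y) x| <= `|ip (k *: x) y| /\
         `|ip (k *: x) y| <= Ba / Aa * `|ip (k *: y) x|))
  /\ ((Aa / Ba * `|ip (k *: y) x| <= `|ip x (k *: y)| /\
         `|ip x (k *: y)| <= Ba / Aa * `|ip (k *: y) x|))
  /\ (`|ip (k *: x + z) y| <= Ba / Aa * (`|k| * `|ip x y| + `|ip z y|))
  /\ (`|ip x (k *: y + z)| <= Ba / Aa * (`|k| * `|ip x y| + `|ip x z|)).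
Proof.
move=> [lin conj _ def] hAB hip a ha Aa Ba ip x y z k.
have [A_gt0 A_le_B] := andP (hAB a ha).
have Aa_gt0 : 0 < Aa by rewrite ltcR.
have Ba_gt0 : 0 < Ba by rewrite ltcR (lt_le_trans A_gt0 A_le_B).
have lb x' y' := (hip a x' y' ha).1; have ub x' y' := (hip a x' y' ha).2.
have eq0 := fuzzy_ip_eq0 Aa_gt0 lb ub.
have scale := fuzzy_norm_ip_scale Aa_gt0 Ba_gt0 lb ub.
have compare := fuzzy_norm_ip_eq Aa_gt0 Ba_gt0 lb ub.
have triangle := fuzzy_norm_ip_le Aa_gt0 Ba_gt0 lb ub (normr_ge0 k).
have ipZl := norm_ipZl lin; have ipZr := norm_ipZr lin conj.
have ipC := norm_ipC conj.
split; first by rewrite eq0; split=> [/def // | x0]; rewrite x0 (ip0l lin).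
split; first by rewrite eq0 (ip0l lin).
split; first by apply: scale => //; rewrite ipZl.
split; first by apply: scale => //; rewrite ipZr.
split; first by apply: scale => //; rewrite ipZl ipC.
split; first by apply: scale => //; rewrite ipZr normr_id ipC.
split; first by apply: compare; rewrite ipZl ipZr.
split; first by apply: compare; rewrite ipZl ipZr.
split; first by apply: compare; rewrite !ipZl ipC.
split; first by apply: compare; rewrite ipZl ipZr ipC.
split; apply: triangle; [exact: norm_ipDZl_le | exact: norm_ipDZr_le].
Qed.
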